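(* Let $\Gamma$ be a finite simple non-abelian group with identity $e$, and let $G=\Gamma^\omega$ with the product topology (each factor discrete) and normalized Haar measure. Let $\mathcal U$ be a free ultrafilter on $\omega$. Define $\psi:G\to\Gamma$ by letting $\psi(x)$, for $x=(x_n)\in G$, be the unique $a\in\Gamma$ with $\{n<\omega: x_n=a\}\in\mathcal U$ (so $\psi$ is a surjective homomorphism whose kernel is $G_{\mathcal I}=\{x\in G:\{n:x_n\ne e\}\notin\mathcal U\}$). Let $g\in\Gamma$, $g\neq e$, let $B$ be the subgroup of $\Gamma$ generated by $g$, and let $H=\psi^{-1}[B]$. Then $H$ is a subgroup of $G$ which is not normal and not Haar measurable. *)

From HB Require Import structures.
From mathcomp Require Import all_boot all_order all_algebra all_fingroup.
From mathcomp Require Import all_classical all_reals.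
From mathcomp Require Import measure probability.

Set Implicit Arguments.
Unset Strict Implicit.
Unset Printing Implicit Defensive.

Local Open Scope classical_set_scope.

Definition Gpow (gT : finGroupType) := nat -> gT.

Section Gpow_defs.
Variable gT : finGroupType.

HB.instance Definition _ := Choice.on (Gpow gT).
HB.instance Definition _ := isPointed.Build (Gpow gT) (fun _ => 1%g).

Definition gmul (x y : Gpow gT) : Gpow gT := fun n => (x n * y n)%g.
Definition ginv (x : Gpow gT) : Gpow gT := fun n => ((x n)^-1)%g.
Definition gone : Gpow gT := fun _ => 1%g.

(* Product topology, each factor discrete: U is open iff every point x of U
   has a basic neighbourhood {y | y agrees with x on the first N coordinates}
   contained in U. *)
Definition prod_open : set (set (Gpow gT)) :=
  [set U | forall x, U x -> exists N : nat,
      [set y | forall n, (n < N)%N -> y n = x n] `<=` U].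

Definition GBorel := g_sigma_algebraType prod_open.

(* mu is a normalized Haar measure: a Borel probability measure invariant under
   left translations. *)
Definition left_invariant (R : realType) (mu : probability GBorel R) :=
  forall (a : Gpow gT) (A : set GBorel), measurable A ->
    mu ((fun x : GBorel => gmul a x) @^-1` A) = mu A.

(* Haar measurable: measurable for the completion of mu. *)
Definition mu_measurable (R : realType) (mu : probability GBorel R)
    (A : set (Gpow gT)) :=
  exists A1 A2 : set GBorel, [/\ measurable A1, measurable A2,
      A1 `<=` A, A `<=` A2 & mu (A2 `\` A1) = 0%E].

Definition is_subgroup (H : set (Gpow gT)) :=
  [/\ H gone, forall x y, H x -> H y -> H (gmul x y) & forall x, H x -> H (ginv x)].

Definition is_normal (H : set (Gpow gT)) :=
  forall y x, H x -> H (gmul (gmul y x) (ginv y)).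

End Gpow_defs.

Definition free_ultrafilter (U : set (set nat)) :=
  [/\ ~ U set0, U setT,
      (forall A B, U A -> U B -> U (A `&` B)) /\
      (forall A B, A `<=` B -> U A -> U B),
      (forall A, U A \/ U (~` A)) &
      (forall A : set nat, finite_set A -> ~ U A)].

Definition psi (gT : finGroupType) (U : set (set nat)) (x : Gpow gT) : gT :=
  xget 1%g (fun a : gT => U [set n | x n = a]).

(* psi is a homomorphism onto Gamma that ignores finitely many coordinates, so H
   is a subgroup, normal only if <[g]> is normal in the simple group Gamma.
   If A1 <= H <= A2 with mu (A2 `\` A1) = 0, the invariance of H under finitely
   supported translations gives mu (C `&` A1) = mu A1 * mu C for every cylinder C.
   Cylinders form a pi-system generating the Borel sets, so mu (A1 `&` _) equals
   mu A1 * mu, and evaluating at A1 yields the zero-one law mu A1 \in {0, 1}.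
   Both values are impossible: finitely many translates of A2 cover the group,
   and a set of full measure meets each of its translates, while A1 is disjoint
   from its translate by a constant outside <[g]>. *)

From HB Require Import structures.
From mathcomp Require Import all_boot all_order all_algebra all_fingroup all_solvable.
From mathcomp Require Import all_classical all_reals.
From mathcomp Require Import finmap interval_inference measure probability sequences lra.

Import Order.TTheory GRing.Theory Num.Theory.

Set Implicit Arguments.
Unset Strict Implicit.
Unset Printing Implicit Defensive.

Local Open Scope classical_set_scope.

Section Ultrafilter.
Variable U : set (set nat).
Hypothesis HU : free_ultrafilter U.

Lemma ultra_neq0 : ~ U set0.
Proof. by case: HU. Qed.

Lemma ultraT : U setT.
Proof. by case: HU. Qed.

Lemma ultraI {A B} : U A -> U B -> U (A `&` B).
Proof. by case: HU => _ _ [+ _] _ _; apply. Qed.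

Lemma ultraS {A B} : U A -> A `<=` B -> U B.
Proof. by case: HU => _ _ [_ sub] _ _ UA /sub; apply. Qed.

Lemma ultraC A : U A \/ U (~` A).
Proof. by case: HU. Qed.

Lemma ultra_cofinite N : U [set n | (N <= n)%N].
Proof.
case: (ultraC [set n | (N <= n)%N]) => // UnN; exfalso.
case: HU => _ _ _ _ /(_ _ _ UnN); apply.
by apply: sub_finite_set (finite_II N) => n /= /negP; rewrite -ltnNge.
Qed.

End Ultrafilter.

Definition finsupp (gT : finGroupType) (a : Gpow gT) :=
  exists N, forall n, (N <= n)%N -> a n = 1%g.

Section UltraLimit.
Variables (gT : finGroupType) (U : set (set nat)).
Hypothesis HU : free_ultrafilter U.

Lemma psiP (x : Gpow gT) : U [set n | x n = psi U x].
Proof.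
suff /(xgetPex 1%g) : exists a, U [set n | x n = a] by [].
apply: contrapT => noval.
suff Unotin (s : seq gT) : U [set n | x n \notin s].
  apply: (ultra_neq0 HU); apply: (ultraS HU (Unotin (enum gT))) => n /=.
  by rewrite mem_enum.
elim: s => [|a s IHs]; first exact: (ultraS HU (ultraT HU)).
have Una : U (~` [set n | x n = a]).
  by case: (ultraC HU [set n | x n = a]) => // Ua; case: noval; exists a.
by apply: (ultraS HU (ultraI HU Una IHs)) => n /= [/eqP na ns]; rewrite inE negb_or na.
Qed.

Lemma psi_eq (x : Gpow gT) a : U [set n | x n = a] -> psi U x = a.
Proof.
move=> Ua; apply: contrapT => psi_neq; apply: (ultra_neq0 HU).
by apply: (ultraS HU (ultraI HU Ua (psiP x))) => n /= [-> psi_a]; apply: psi_neq.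
Qed.

Lemma psiM (x y : Gpow gT) : psi U (gmul x y) = (psi U x * psi U y)%g.
Proof.
apply: psi_eq; apply: (ultraS HU (ultraI HU (psiP x) (psiP y))) => n /= [xn yn].
by rewrite /gmul xn yn.
Qed.

Lemma psiV (x : Gpow gT) : psi U (ginv x) = ((psi U x)^-1)%g.
Proof. by apply: psi_eq; apply: (ultraS HU (psiP x)) => n /= xn; rewrite /ginv xn. Qed.

Lemma psi_cst (a : gT) : psi U (fun=> a) = a.
Proof. by apply: psi_eq; apply: (ultraS HU (ultraT HU)). Qed.

Lemma psi_finsupp (a : Gpow gT) : finsupp a -> psi U a = 1%g.
Proof.
by case=> N a1; apply: psi_eq; apply: (ultraS HU (ultra_cofinite HU N)) => n /= /a1.
Qed.

End UltraLimit.

Section PsiPreimage.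
Variables (gT : finGroupType) (U : set (set nat)).
Hypothesis HU : free_ultrafilter U.
Variable B : {group gT}.

Let H : set (Gpow gT) := psi U @^-1` [set b | b \in B].

Lemma psi_preimage_subgroup : is_subgroup H.
Proof.
split=> [|x y|x]; rewrite /H /=.
- by rewrite /gone psi_cst // group1.
- by rewrite psiM // => Bx By; rewrite groupM.
- by rewrite psiV // => Bx; rewrite groupV.
Qed.

Lemma psi_preimage_normal : is_normal H -> (B <| [set: gT]%SET)%g.
Proof.
move=> nH; rewrite /normal finset.subsetT /=; apply/fintype.subsetP => c _.
rewrite inE; apply/fintype.subsetP => _ /imsetP[b Bb ->].
have := nH (fun=> c^-1)%g (fun=> b); rewrite /H /= !psiM // psiV // !psi_cst //.
by rewrite invgK -mulgA -conjgE; apply.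
Qed.

End PsiPreimage.

Lemma cycle_neqT (gT : finGroupType) (g : gT) :
  ~~ abelian [set: gT]%SET -> <[g]>%g != [set: gT]%SET.
Proof. by apply: contraNneq => <-; apply: cycle_abelian. Qed.

Lemma cycle_not_normal (gT : finGroupType) (g : gT) :
  simple [set: gT]%SET -> ~~ abelian [set: gT]%SET -> g != 1%g ->
  ~~ (<[g]> <| [set: gT]%SET)%g.
Proof.
move=> simpleT nabT ntg; apply/negP => /((simpleP _ simpleT).2 <[g]>%G) [] /eqP.
  by rewrite cycle_eq1 (negPf ntg).
by rewrite (negPf (cycle_neqT g nabT)).
Qed.

Section Cylinders.
Variable gT : finGroupType.

Definition cylinder (N : nat) (x : Gpow gT) : set (GBorel gT) :=
  [set y | forall n, (n < N)%N -> y n = x n].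

Definition cylinders : set (set (Gpow gT)) :=
  [set C | C = set0 \/ exists N x, C = cylinder N x].

Lemma eq_cylinder N x y :
  (forall n, (n < N)%N -> x n = y n) -> cylinder N x = cylinder N y.
Proof.
by move=> xy; apply/seteqP; split=> z /= zc n ltnN; rewrite zc // xy.
Qed.

Lemma cylinder_open N x : prod_open (cylinder N x).
Proof. by move=> y yc; exists N => z /= zy n ltnN; rewrite zy // yc. Qed.

Lemma prod_open_measurable (A : set (GBorel gT)) : prod_open A -> measurable A.
Proof. exact: sub_sigma_algebra. Qed.

Lemma cylinder_measurable N x : measurable (cylinder N x).
Proof. by apply: prod_open_measurable; apply: cylinder_open. Qed.

Lemma measurable_gmul (a : Gpow gT) :
  measurable_fun setT (fun x : GBorel gT => gmul a x : GBorel gT).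
Proof.
apply: (@measurability _ _ (GBorel gT) (GBorel gT) setT _ (@prod_open gT)) => //.
move=> _ [V oV <-]; apply: prod_open_measurable; rewrite setTI => y /= Vay.
have [N cylV] := oV _ Vay; exists N => z /= zy; apply: cylV => n ltnN /=.
by rewrite /gmul zy.
Qed.

Lemma gmul_preimage_measurable (a : Gpow gT) (A : set (GBorel gT)) :
  measurable A -> measurable ((fun x : GBorel gT => gmul a x) @^-1` A).
Proof. by move=> mA; have := measurable_gmul a measurableT mA; rewrite setTI. Qed.

Lemma cylinders_setI_closed : setI_closed cylinders.
Proof.
move=> A B [->|[N [x ->]]]; first by left; rewrite set0I.
move=> [->|[M [z ->]]]; first by left; rewrite setI0.
have [[y [yx yz]]|disj] := pselect (exists y, cylinder N x y /\ cylinder M z y).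
  right; exists (maxn N M), y; apply/seteqP; split.
    by move=> w [wx wz] n; rewrite leq_max => /orP[] ltn; [rewrite wx ?yx|rewrite wz ?yz].
  by move=> w wy; split=> n ltn;
    [rewrite -yx // wy // leq_max ltn|rewrite -yz // wy // leq_max ltn orbT].
by left; apply/seteqP; split=> // y [xy zy]; apply: disj; exists y.
Qed.

Definition cylinder_shift N (x z : Gpow gT) : Gpow gT :=
  fun n => if (n < N)%N then (z n * (x n)^-1)%g else 1%g.

Lemma finsupp_cylinder_shift N x z : finsupp (cylinder_shift N x z).
Proof. by exists N => n; rewrite /cylinder_shift leqNgt => /negbTE ->. Qed.

Lemma preimage_cylinder_shift N x z :
  (fun y : GBorel gT => gmul (cylinder_shift N x z) y) @^-1` cylinder N z =
  cylinder N x.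
Proof.
apply/seteqP; split=> y /= yc n ltnN.
  have := yc n ltnN; rewrite /gmul /cylinder_shift ltnN => /(canRL (mulKg _)) ->.
  by rewrite invMg invgK mulgKV.
by rewrite /gmul /cylinder_shift ltnN yc // mulgKV.
Qed.

Variable N : nat.

Definition pad (t : {ffun 'I_N -> gT}) : Gpow gT :=
  fun n => if insub n is Some i then t i else 1%g.

Definition prefix (y : Gpow gT) : {ffun 'I_N -> gT} := [ffun i => y (val i)].

Lemma cylinder_pad_prefix (y : Gpow gT) : cylinder N (pad (prefix y)) = cylinder N y.
Proof. by apply: eq_cylinder => n ltnN; rewrite /pad insubT /= ffunE. Qed.

Lemma trivIset_cylinder_pad : trivIset setT (fun t => cylinder N (pad t)).
Proof.
move=> t t' _ _ [y [yt yt']]; apply/ffunP => i.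
by have := yt _ (ltn_ord i); have := yt' _ (ltn_ord i); rewrite /pad valK => -> ->.
Qed.

Lemma bigcup_cylinder_pad (V : set (Gpow gT)) :
  \bigcup_(t in [set t | cylinder N (pad t) `<=` V]) cylinder N (pad t) =
  [set y | cylinder N y `<=` V].
Proof.
apply/seteqP; split=> [y [t /= tV ty]|y /= yV].
  by rewrite -(eq_cylinder (x := pad t)) // => n ltnN; rewrite ty.
by exists (prefix y); rewrite /= cylinder_pad_prefix // -cylinder_pad_prefix => n.
Qed.

End Cylinders.

Lemma measurable_cylinders (gT : finGroupType) :
  @measurable _ (GBorel gT) = <<s @cylinders gT >>.
Proof.
apply/seteqP; split; last first.
  apply: smallest_sub; first exact: sigma_algebra_measurable.
  by move=> C [->|[N [x ->]]]; [exact: measurable0|exact: cylinder_measurable].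
pose GC := g_sigma_algebraType (@cylinders gT).
apply: smallest_sub; first exact: (@sigma_algebra_measurable _ GC).
move=> V oV; have -> : V = \bigcup_N [set y | cylinder N y `<=` V].
  apply/seteqP; split=> [y Vy|y [N _ /= yV]]; last by apply: yV => n.
  by have [N cylV] := oV _ Vy; exists N => // z /= zy; apply: cylV => n /zy.
apply: (@bigcupT_measurable _ GC) => N; rewrite -bigcup_cylinder_pad.
apply: (@fin_bigcup_measurable _ GC) => [|t _]; first exact: finite_finset.
by apply: sub_sigma_algebra; right; exists N, (pad t).
Qed.

Local Open Scope ring_scope.
Local Open Scope ereal_scope.

Lemma le_measure_null d (T : measurableType d) (R : realType)
    (mu : {measure set T -> \bar R}) (X Y D : set T) :
  measurable X -> measurable Y -> measurable D ->
  X `<=` Y `|` D -> mu D = 0 -> mu X <= mu Y.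
Proof.
move=> mX mY mD XYD D0; rewrite -(measureU0 mY mD D0).
by apply: le_measure; rewrite ?in_setE //; exact: measurableU.
Qed.

Lemma fsume_cst (R : realType) (T : choiceType) (D : set T) (c : R) :
  finite_set D -> \sum_(t \in D) c%:E = (c *+ #|` fset_set D|)%:E.
Proof.
by move=> finD; rewrite fsbig_finite //= sumEFin big_const_seq count_predT iter_addr_0.
Qed.

Lemma measure_cylinder_partition (gT : finGroupType) (R : realType)
    (mu : {measure set (GBorel gT) -> \bar R}) N (B : set (GBorel gT)) :
  measurable B ->
  mu B = \sum_(t \in [set: {ffun 'I_N -> gT}]) mu (cylinder N (pad t) `&` B).
Proof.
move=> mB; rewrite -measure_fin_bigcup //.
- congr (mu _); apply/seteqP; split=> [y By|y [t _ []] //].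
  by exists (prefix N y) => //; split; rewrite // cylinder_pad_prefix.
- exact: finite_finset.
- move=> t t' _ _ [y [[yt _] [yt' _]]].
  by apply: trivIset_cylinder_pad => //; exists y.
- by move=> t _; apply: measurableI => //; apply: cylinder_measurable.
Qed.

Section InvariantProbability.
Variables (gT : finGroupType) (R : realType) (mu : probability (GBorel gT) R).
Hypothesis mu_inv : left_invariant mu.

Lemma translates_null_not_cover (A : set (GBorel gT)) (a : nat -> Gpow gT) :
  measurable A -> mu A = 0 ->
  ~ [set: GBorel gT] `<=` \bigcup_n (fun x : GBorel gT => gmul (a n) x) @^-1` A.
Proof.
move=> mA A0 cover.
have := measure_sigma_subadditive mu
  (fun n => gmul_preimage_measurable (a n) mA) measurableT cover.
rewrite eseries0 => [|n _ _]; last by move: (mu_inv (a n) mA); rewrite A0.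
by move: (probability_setT mu) => /= ->; rewrite lee_fin ler10.
Qed.

Lemma mu_cylinder N x z : mu (cylinder N x) = mu (cylinder N z).
Proof.
by rewrite -(preimage_cylinder_shift N x z) mu_inv //; apply: cylinder_measurable.
Qed.

Lemma measure1_meets_translate (A : set (GBorel gT)) (a : Gpow gT) :
  measurable A -> mu A = 1 ->
  A `&` (fun x : GBorel gT => gmul a x) @^-1` A !=set0.
Proof.
move=> mA A1; apply/set0P/eqP => disj.
have maA := gmul_preimage_measurable a mA.
have := probability_le1 mu (measurableU _ _ mA maA).
rewrite measureU //; move: (mu_inv a mA) => /= ->.
by rewrite A1 -EFinD lee_fin; lra.
Qed.

Variable H : set (Gpow gT).
Hypothesis H_finsupp : forall a y, finsupp a -> H (gmul a y) <-> H y.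
Variables A1 A2 : set (GBorel gT).
Hypotheses (mA1 : measurable A1) (mA2 : measurable A2).
Hypotheses (A1H : A1 `<=` H) (HA2 : H `<=` A2) (A21_null : mu (A2 `\` A1) = 0).

Let H_sub : H `<=` A1 `|` (A2 `\` A1).
Proof. by move=> y /HA2 A2y; have [A1y|nA1y] := pselect (A1 y); [left|right]. Qed.

(* The shift moving one cylinder onto the other preserves H, hence preserves A1
   up to the null set A2 `\` A1. *)
Lemma mu_cylinderI_eq N x z :
  mu (cylinder N x `&` A1) = mu (cylinder N z `&` A1).
Proof.
have fsa := finsupp_cylinder_shift N x z.
set f := fun y : GBorel gT => gmul (cylinder_shift N x z) y.
have mC := cylinder_measurable N x.
have mD : measurable (A2 `\` A1) by apply: measurableD.
have mfA1 : measurable (f @^-1` A1) by apply: gmul_preimage_measurable.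
have mfD : measurable (f @^-1` (A2 `\` A1)) by apply: gmul_preimage_measurable.
have fD0 : mu (f @^-1` (A2 `\` A1)) = 0 by rewrite -A21_null; apply: mu_inv.
rewrite -[RHS](mu_inv (cylinder_shift N x z)); last first.
  by apply: measurableI => //; apply: cylinder_measurable.
rewrite -/f preimage_setI preimage_cylinder_shift.
apply/eqP; rewrite eq_le; apply/andP; split.
- apply: (le_measure_null _ _ mfD _ fD0); try exact: measurableI.
  by move=> y [Cy /A1H /(H_finsupp y fsa).2 /H_sub[]]; [left|right].
- apply: (le_measure_null _ _ mD _ A21_null); try exact: measurableI.
  by move=> y [Cy /A1H /(H_finsupp y fsa).1 /H_sub[]]; [left|right].
Qed.

(* The cylinders of length N partition the group into pieces of equal measure,
   and their traces on A1 also have equal measures. *)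
Lemma mu_cylinderI N x : mu (cylinder N x `&` A1) = mu A1 * mu (cylinder N x).
Proof.
have mC := cylinder_measurable N x.
have mCA1 : measurable (cylinder N x `&` A1) by apply: measurableI.
have one : 1 = \sum_(t \in [set: {ffun 'I_N -> gT}]) mu (cylinder N (pad t) `&` setT).
  by rewrite -(probability_setT mu); apply: measure_cylinder_partition.
have A1E : mu A1 = \sum_(t \in [set: {ffun 'I_N -> gT}]) mu (cylinder N (pad t) `&` A1)
  := measure_cylinder_partition mu N mA1.
rewrite (eq_fsbigr (fun=> (fine (mu (cylinder N x)))%:E)) in one; last first.
  by move=> t _; rewrite setIT (mu_cylinder _ _ x) fineK ?fin_num_measure.
rewrite (eq_fsbigr (fun=> (fine (mu (cylinder N x `&` A1)))%:E)) in A1E; last first.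
  by move=> t _; rewrite (mu_cylinderI_eq _ _ x) fineK ?fin_num_measure.
have finT : finite_set [set: {ffun 'I_N -> gT}] by apply: finite_finset.
rewrite !fsume_cst // in one A1E.
move: one => /(congr1 fine) /= one_k; rewrite A1E.
rewrite -(fineK (fin_num_measure _ _ mCA1)); set s := fine _.
rewrite -(fineK (fin_num_measure _ _ mC)) -EFinM; set r := fine _ in one_k *.
by rewrite mulrnAl -mulrnAr -one_k mulr1.
Qed.

Lemma measure_inner_01 : mu A1 = 0 \/ mu A1 = 1.
Proof.
have r0 : (0 <= fine (mu A1))%R by apply/fine_ge0/measure_ge0.
have restr_scale : mrestr mu mA1 A1 = mscale (NngNum r0) mu A1.
  apply: (@measure_unique _ R (GBorel gT) (@cylinders gT) (fun=> cylinder 0 point)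
    (@measurable_cylinders gT) (@cylinders_setI_closed gT)) => //.
  - by move=> _; right; exists 0%N, point.
  - by apply/seteqP; split=> // y _; exists 0%N.
  - move=> A [->|[N [x ->]]]; first by rewrite !measure0.
    have e := mu_cylinderI N x.
    by rewrite -[mu A1](fineK (fin_num_measure _ _ mA1)) in e; exact: e.
  - move=> _ /=; rewrite /mrestr (@le_lt_trans _ _ 1) ?ltry //.
    by apply: probability_le1; apply: measurableI => //; apply: cylinder_measurable.
move: restr_scale; rewrite /mrestr /mscale /= setIid fineK ?fin_num_measure //.
rewrite -[mu A1](fineK (fin_num_measure _ _ mA1)) -EFinM => -[] /eqP.
rewrite -subr_eq0 -{1}[fine _]mulr1 -mulrBr mulf_eq0 subr_eq0.
by move=> /orP[] /eqP ->; [left|right].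
Qed.

End InvariantProbability.

Lemma psi_preimage_not_mu_measurable (gT : finGroupType) (U : set (set nat))
    (HU : free_ultrafilter U) (B : {group gT}) (R : realType)
    (mu : probability (GBorel gT) R) :
  B != [set: gT]%SET -> left_invariant mu ->
  ~ mu_measurable mu (psi U @^-1` [set b | b \in B]).
Proof.
move=> BneqT mu_inv [A1 [A2 [mA1 mA2 A1H HA2 A21_null]]].
set H := psi U @^-1` _ in A1H HA2.
have psi_cstM (c : gT) y : psi U (gmul (fun=> c) y) = (c * psi U y)%g.
  by rewrite psiM // psi_cst.
have H_finsupp a y : finsupp a -> H (gmul a y) <-> H y.
  by move=> fsa; rewrite /H /= psiM // psi_finsupp // mul1g.
have [A1_0|A1_1] := measure_inner_01 mu_inv H_finsupp mA1 mA2 A1H HA2 A21_null.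
- have A2_0 : mu A2 = 0%E.
    have A1A2 : A1 `<=` A2 by move=> y /A1H /HA2.
    by rewrite -(setDUK A1A2) measureU0 //; apply: measurableD.
  apply: (translates_null_not_cover mu_inv (a := fun n _ => nth 1%g (enum gT) n)
    mA2 A2_0).
  move=> y _; exists (index (psi U y)^-1%g (enum gT)) => //=; apply: HA2.
  by rewrite /H /= psi_cstM nth_index ?mem_enum // mulVg group1.
- move: BneqT; rewrite -finset.properT => /properP[_ [a0 _ a0B]].
  have [y [A1y A1a0y]] := measure1_meets_translate mu_inv (fun=> a0) mA1 A1_1.
  move: (A1H _ A1a0y) (A1H _ A1y); rewrite /H /= psi_cstM => a0yB yB.
  by move: a0B; rewrite -(groupMr _ yB) a0yB.
Qed.

Theorem mainTheorem5 (gT : finGroupType)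
  (Hsimple : simple [set: gT]%SET) (Hnab : ~~ abelian [set: gT]%SET)
  (U : set (set nat)) (HU : free_ultrafilter U)
  (g : gT) (Hg : g != 1%g) :
  let H : set (Gpow gT) := psi U @^-1` [set b | b \in <[g]>%g] in
  is_subgroup H /\ ~ is_normal H /\
  (forall (R : realType) (mu : probability (GBorel gT) R),
      left_invariant mu -> ~ mu_measurable mu H).
Proof.
move=> H; split; first exact: (psi_preimage_subgroup HU).
split; first by move/(psi_preimage_normal HU); apply/negP; apply: cycle_not_normal.
move=> R mu mu_inv; apply: psi_preimage_not_mu_measurable mu_inv => //.
exact: cycle_neqT.
Qed.
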